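(* Let $\Sigma=(0,\infty]$, let $a,b\in\mathbb{N}$ with $a,b>1$, and let $c\in\mathbb{R}$ with $c>0$. Fix $z\in\Sigma^{\infty}$ with $l(z)=\infty$ and $z_k\neq\infty$ for all $k\in\omega_b$ with $k\geq 2$. Let $$\Sigma_{b,c}^{\infty}:=\{y\in\Sigma^{\infty}: 2\leq l(y),\ y_1=c,\ y_k=\infty \text{ for all } k\notin\omega_b \text{ with } 2\leq k\leq l(y)\}.$$ Define $\Theta_{a,b}^{z}:\Sigma_{b,c}^{\infty}\to\Sigma_{b,c}^{\infty}$ by $\Theta_{a,b}^{z}(x)=x_{\Theta_{a,b}^{z}}$, where $$(x_{\Theta_{a,b}^{z}})_k:=\begin{cases} c & \text{if } k=1,\\ \infty & \text{if } k\notin\omega_b \text{ and } 2\leq k\leq l(x)+1,\\ a\cdot x_{k/b}+z_k & \text{if } k\in\omega_b \text{ and } k/b\leq l(x).\end{cases}$$ Then $\Theta_{a,b}^{z}$ has a unique fixed point $v\in\Sigma_{b,c}^{\infty}$, and this fixed point satisfies $l(v)=\infty$.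
   Context: $\mathbb{N}$ denotes the set of positive integers. For an alphabet (nonempty set) $\Sigma$, $\Sigma^{\infty}$ denotes the set of all nonempty finite and infinite sequences (words) over $\Sigma$; for $x\in\Sigma^\infty$, $l(x)\in[1,\infty]$ is its length and $x_k$ its $k$-th letter ($1\le k\le l(x)$). For $b\in\mathbb{N}$, $\omega_b=\{b^k:k\in\mathbb{N}\}$. Arithmetic on $(0,\infty]$ uses the usual conventions ($a\cdot\infty+t=\infty$). *)

From Stdlib Require Import Reals Arith ClassicalEpsilon.
Open Scope R_scope.

(* A letter of Sigma = (0, +oo]: [Some r] is the real r, [None] is +oo. *)
Definition letter := option R.

Definition in_Sigma (s : letter) : Prop :=
  match s with Some r => 0 < r | None => True end.

(* A word in Sigma^oo: a length l in [1, oo] ([None] = oo) and letters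
   x_k for 1 <= k <= l (values outside this range are irrelevant). *)
Record word := mkWord { wlen : option nat; wlet : nat -> letter }.

Definition idx_le (k : nat) (l : option nat) : Prop :=
  match l with Some n => (k <= n)%nat | None => True end.

Definition is_word (w : word) : Prop :=
  (match wlen w with Some n => (1 <= n)%nat | None => True end) /\
  forall k, (1 <= k)%nat -> idx_le k (wlen w) -> in_Sigma (wlet w k).

Definition weq (x y : word) : Prop :=
  wlen x = wlen y /\
  forall k, (1 <= k)%nat -> idx_le k (wlen x) -> wlet x k = wlet y k.

Definition in_omega (b k : nat) : Prop := exists j, (1 <= j)%nat /\ k = (b ^ j)%nat.

Definition Sigma_bc (b : nat) (c : R) (y : word) : Prop :=
  is_word y /\ idx_le 2 (wlen y) /\ wlet y 1%nat = Some c /\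
  forall k, (2 <= k)%nat -> idx_le k (wlen y) -> ~ in_omega b k -> wlet y k = None.

(* a * x + t on (0, oo], with a * oo + t = oo and a * x + oo = oo *)
Definition aff (a : nat) (x t : letter) : letter :=
  match x, t with
  | Some r, Some s => Some (INR a * r + s)
  | _, _ => None
  end.

Definition lsucc (l : option nat) : option nat :=
  match l with Some n => Some (S n) | None => None end.

Definition Theta (a b : nat) (c : R) (z x : word) : word :=
  mkWord (lsucc (wlen x))
    (fun k => if Nat.eqb k 1 then Some c
              else if excluded_middle_informative (in_omega b k)
                   then aff a (wlet x (k / b)) (wlet z k)
                   else None).

(** For [k >= 2] the letter [k] of [Theta x] depends only on [z_k] and, when
    [k] is in [omega_b], on [x_(k/b)] with [1 <= k/b < k].  So [Theta] acts on
    letters as a causal operator: its values below [k] determine its value at [k].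
    Such an operator has a unique fixed sequence, and [k+1] iterations from any
    start already give its letter [k].  A fixed word [w] also satisfies
    [l(w) + 1 = l(w)], hence [l(w) = oo]. *)

From Stdlib Require Import Reals Arith Lia Lra ClassicalEpsilon.
Open Scope R_scope.

Section CausalFixpoint.

Context {T : Type}.
Variable F : (nat -> T) -> nat -> T.

Hypothesis F_causal : forall f g k, (1 <= k)%nat ->
  (forall j, (1 <= j < k)%nat -> f j = g j) -> F f k = F g k.

Variable f0 : nat -> T.

Definition causal_fix (k : nat) : T := Nat.iter (S k) F f0 k.

Lemma iter_causal_stable n m k : (1 <= k)%nat -> (k < n)%nat -> (k < m)%nat ->
  Nat.iter n F f0 k = Nat.iter m F f0 k.
Proof.
  revert m k. induction n as [|n IH]; intros m k Hk Hn Hm; [lia|].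
  destruct m as [|m]; [lia|]. simpl.
  apply F_causal; [exact Hk|]. intros j Hj. apply IH; lia.
Qed.

Lemma causal_fix_eq k : (1 <= k)%nat -> F causal_fix k = causal_fix k.
Proof.
  intros Hk. unfold causal_fix at 2. simpl.
  apply F_causal; [exact Hk|]. intros j Hj.
  apply iter_causal_stable; lia.
Qed.

Lemma causal_fix_unique g : (forall k, (1 <= k)%nat -> F g k = g k) ->
  forall k, (1 <= k)%nat -> g k = causal_fix k.
Proof.
  intros Hg k. induction k as [k IH] using lt_wf_ind. intros Hk.
  rewrite <- (Hg k Hk), <- (causal_fix_eq k Hk).
  apply F_causal; [exact Hk|]. intros j Hj. apply IH; lia.
Qed.

Lemma causal_fix_ind (P : T -> Prop) :
  (forall k, P (f0 k)) -> (forall f, (forall k, P (f k)) -> forall k, P (F f k)) ->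
  forall k, P (causal_fix k).
Proof.
  intros H0 HF k. unfold causal_fix. generalize (S k). intros n. revert k.
  induction n as [|n IH]; simpl; auto.
Qed.

End CausalFixpoint.

Lemma in_omega_ge (b k : nat) : (1 < b)%nat -> in_omega b k -> (b <= k)%nat.
Proof.
  intros Hb [j [Hj ->]].
  replace b with (b ^ 1)%nat at 1 by (simpl; lia).
  apply Nat.pow_le_mono_r; lia.
Qed.

Lemma in_omega_div_range (b k : nat) : (1 < b)%nat -> in_omega b k ->
  (1 <= k / b < k)%nat.
Proof.
  intros Hb Ho. pose proof (in_omega_ge b k Hb Ho). split.
  - assert (0 < k / b)%nat by (apply Nat.div_str_pos; lia). lia.
  - apply Nat.div_lt; lia.
Qed.

Lemma aff_in_Sigma (a : nat) (x t : letter) :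
  in_Sigma x -> in_Sigma t -> in_Sigma (aff a x t).
Proof.
  destruct x as [r|], t as [s|]; simpl; auto.
  intros Hr Hs. pose proof (pos_INR a). nra.
Qed.

Lemma lsucc_fixed (l : option nat) : lsucc l = l -> l = None.
Proof. destruct l as [n|]; simpl; [intros [=]; lia | reflexivity]. Qed.

(* Only the letters of the argument matter: [wlet (Theta a b c z w)] is
   convertible to [theta_step a b c z (wlet w)]. *)
Definition theta_step (a b : nat) (c : R) (z : word) (f : nat -> letter) :
  nat -> letter := wlet (Theta a b c z (mkWord None f)).

Lemma theta_step_not_omega a b c z f k : (2 <= k)%nat -> ~ in_omega b k ->
  theta_step a b c z f k = None.
Proof.
  intros Hk Hno. unfold theta_step, Theta. simpl.
  destruct (Nat.eqb_spec k 1); [lia|].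
  destruct (excluded_middle_informative (in_omega b k)); tauto.
Qed.

Section ThetaStep.

Variables (a b : nat) (c : R) (z : word).
Hypothesis b_gt1 : (1 < b)%nat.

Lemma theta_step_causal f g k : (1 <= k)%nat ->
  (forall j, (1 <= j < k)%nat -> f j = g j) ->
  theta_step a b c z f k = theta_step a b c z g k.
Proof.
  intros _ Hfg. unfold theta_step, Theta. simpl.
  destruct (Nat.eqb k 1); [reflexivity|].
  destruct (excluded_middle_informative (in_omega b k)) as [Ho|]; [|reflexivity].
  rewrite (Hfg (k / b)%nat); [reflexivity|].
  exact (in_omega_div_range b k b_gt1 Ho).
Qed.

Lemma theta_step_in_Sigma f : 0 < c -> is_word z -> wlen z = None ->
  (forall k, in_Sigma (f k)) -> forall k, in_Sigma (theta_step a b c z f k).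
Proof.
  intros Hc [_ Hz] Hzl Hf k. unfold theta_step, Theta. simpl.
  destruct (Nat.eqb k 1); [exact Hc|].
  destruct (excluded_middle_informative (in_omega b k)) as [Ho|]; [|exact I].
  apply aff_in_Sigma; [apply Hf|].
  pose proof (in_omega_ge b k b_gt1 Ho).
  apply Hz; [lia|]. rewrite Hzl. exact I.
Qed.

End ThetaStep.

Theorem theorem4 (a b : nat) (c : R) (z : word) :
  (1 < a)%nat -> (1 < b)%nat -> 0 < c ->
  is_word z -> wlen z = None ->
  (forall k, (2 <= k)%nat -> in_omega b k -> wlet z k <> None) ->
  exists v : word,
    Sigma_bc b c v /\ weq (Theta a b c z v) v /\
    (forall w : word, Sigma_bc b c w -> weq (Theta a b c z w) w -> weq w v) /\
    wlen v = None.
Proof.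
  intros _ Hb Hc Hz Hzl _.
  pose (F := theta_step a b c z).
  pose proof (theta_step_causal a b c z Hb) as HF.
  set (v := mkWord None (causal_fix F (fun _ => Some c))).
  assert (Hfix : forall k, (1 <= k)%nat -> F (wlet v) k = wlet v k)
    by exact (causal_fix_eq F HF _).
  exists v. split; [|split; [|split]].
  - split; [split; [exact I|]|split; [exact I|split; [reflexivity|]]].
    + intros k _ _. simpl. apply (causal_fix_ind F); [exact (fun _ => Hc)|].
      exact (fun f Hf => theta_step_in_Sigma a b c z Hb f Hc Hz Hzl Hf).
    + intros k Hk _ Hno. rewrite <- (Hfix k) by lia.
      exact (theta_step_not_omega a b c z _ k Hk Hno).
  - split; [reflexivity|]. intros k Hk _. exact (Hfix k Hk).
  - intros w _ [Hl Hw].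
    assert (Hwl : wlen w = None) by exact (lsucc_fixed _ Hl).
    split; [exact Hwl|]. simpl in Hw. rewrite Hwl in Hw.
    intros k Hk _. apply (causal_fix_unique F HF); [|exact Hk].
    intros j Hj. exact (Hw j Hj I).
  - reflexivity.
Qed.
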